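(* Let $V\le\mathbb{F}_2^n$ be a linear subspace of dimension $r$, $d=n-r$, $\mathbf{s}_0\in\mathbb{F}_2^n$, and let $\rho$ be an $n$-qubit state whose syndrome distribution is $p_\rho=p_{\mathbf{s}_0,V}$, where $p_{\mathbf{s}_0,V}(\mathbf{s})=2^{-r}\mathbf{1}[\mathbf{s}\in\mathbf{s}_0+V]$. Consider the adaptive certification procedure with threshold $\varepsilon=0$: gauges $A_1,A_2,\dots\in\mathrm{GL}(n,2)$ are queried, $A_k$ with columns $\mathbf{a}_{k,1},\dots,\mathbf{a}_{k,n}$; after round $k$ one forms $Q_k=\{\mathbf{a}_{j,i}:j\le k,\ i\le n\}$, $\mathcal{F}_k=\{p\in\Delta(\mathbb{F}_2^n):\widehat p(\mathbf{u})=\mu_\rho(\mathbf{u})\ \forall\mathbf{u}\in Q_k\}$, $L_k=\min_{p\in\mathcal{F}_k}p(\mathbf{0})$, $U_k=\max_{p\in\mathcal{F}_k}p(\mathbf{0})$, and the procedure stops at the first $k$ with $U_k-L_k\le\varepsilon$, returning $[L_k,U_k]$. Suppose that by some round $t$ the queried label set $Q_t$ contains a basis of $V^\perp=\{\mathbf{u}:\mathbf{u}\cdot\mathbf{v}=0\ \forall\mathbf{v}\in V\}$ and, in the case $\mathbf{s}_0\in V$, also contains one representative of every nonzero coset of $\mathbb{F}_2^n/V^\perp$. Then the procedure terminates by round $t$ and returns the exact value $$F(\rho,\psi)=p_\rho(\mathbf{0})=\begin{cases}2^{-r},&\mathbf{s}_0\in V,\\ 0,&\mathbf{s}_0\notin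 V.\end{cases}$$ Thus the number of such structurally relevant stabilizer labels is $d$ if $\mathbf{s}_0\notin V$, and at most $d+2^r-1$ if $\mathbf{s}_0\in V$.
   Context: Setting: $|\psi\rangle$ is an $n$-qubit stabilizer state whose stabilizer group is generated by independent commuting Pauli operators $g_1,\dots,g_n$; $g(\mathbf{u})=\prod_j g_j^{u_j}$ for $\mathbf{u}\in\mathbb{F}_2^n$. Syndrome projectors $\Pi_{\mathbf{s}}=2^{-n}\prod_j(I+(-1)^{s_j}g_j)$ are orthogonal rank-one projectors summing to identity with $\Pi_{\mathbf{0}}=|\psi\rangle\langle\psi|$. The syndrome distribution is $p_\rho(\mathbf{s})=\mathrm{tr}(\rho\Pi_{\mathbf{s}})$, so $F(\rho,\psi)=\langle\psi|\rho|\psi\rangle=p_\rho(\mathbf{0})$; $\mu_\rho(\mathbf{u})=\mathrm{tr}(\rho g(\mathbf{u}))=\widehat{p_\rho}(\mathbf{u})$ with Walsh transform $\widehat p(\mathbf{u})=\sum_{\mathbf{s}}(-1)^{\mathbf{u}\cdot\mathbf{s}}p(\mathbf{s})$ and $\mathbf{u}\cdot\mathbf{s}$ the mod-2 inner product. $\Delta(\mathbb{F}_2^n)$ is the set of probability distributions on $\mathbb{F}_2^n$; $\mathrm{GL}(n,2)$ the invertible binary $n\times n$ matrices. The claim does not depend on how the gauges are chosen. *)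

From HB Require Import structures.
From mathcomp Require Import all_boot all_order all_algebra.
From mathcomp Require Import classical_sets reals.
Set Implicit Arguments. Unset Strict Implicit. Unset Printing Implicit Defensive.
Import Order.TTheory GRing.Theory Num.Theory.
Local Open Scope ring_scope.

Definition dotF2 (n : nat) (u v : 'rV['F_2]_n) : 'F_2 := (u *m v^T) 0 0.

Definition walsh (R : realType) (n : nat) (p : {ffun 'rV['F_2]_n -> R})
  (u : 'rV['F_2]_n) : R :=
  \sum_(s : 'rV['F_2]_n) (if dotF2 u s == 0 then 1 else -1) * p s.

Definition perp_set (n : nat) (V : {vspace 'rV['F_2]_n}) : {set 'rV['F_2]_n} :=
  [set u | [forall v, (v \in V) ==> (dotF2 u v == 0)]].

Definition perp_space (n : nat) (V : {vspace 'rV['F_2]_n}) : {vspace 'rV['F_2]_n} :=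
  <<enum (perp_set V)>>%VS.

Definition pcoset (R : realType) (n : nat) (s0 : 'rV['F_2]_n)
  (V : {vspace 'rV['F_2]_n}) : {ffun 'rV['F_2]_n -> R} :=
  [ffun s => if s - s0 \in V then (2 ^+ \dim V)^-1 else 0].

(* Q_k: all columns a_{j,i} of the gauges A_1, ..., A_k (rounds start at 1) *)
Definition labels (n : nat) (A : nat -> 'M['F_2]_n) (k : nat) : {set 'rV['F_2]_n} :=
  [set u | [exists j : 'I_k.+1, [exists i : 'I_n,
             (0 < (j : nat))%N && (u == (col i (A j))^T)]]].

Definition is_distr (R : realType) (n : nat) (p : {ffun 'rV['F_2]_n -> R}) : Prop :=
  (forall s, 0 <= p s) /\ \sum_s p s = 1.

Definition feasible (R : realType) (n : nat) (A : nat -> 'M['F_2]_n)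
  (mu : 'rV['F_2]_n -> R) (k : nat) : set {ffun 'rV['F_2]_n -> R} :=
  [set p | is_distr p /\ forall u, u \in labels A k -> walsh p u = mu u].

Definition Lk (R : realType) (n : nat) (A : nat -> 'M['F_2]_n)
  (mu : 'rV['F_2]_n -> R) (k : nat) : R :=
  inf [set p 0 | p in feasible A mu k].
Definition Uk (R : realType) (n : nat) (A : nat -> 'M['F_2]_n)
  (mu : 'rV['F_2]_n -> R) (k : nat) : R :=
  sup [set p 0 | p in feasible A mu k].

Definition stops (R : realType) (n : nat) (A : nat -> 'M['F_2]_n)
  (mu : 'rV['F_2]_n -> R) (eps : R) (k : nat) : Prop :=
  Uk A mu k - Lk A mu k <= eps.

Definition nonzero_cosets (n : nat) (V : {vspace 'rV['F_2]_n}) : {set {set 'rV['F_2]_n}} :=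
  [set [set u + w | w in perp_set V] | u : 'rV['F_2]_n] :\ perp_set V.

From HB Require Import structures.
From mathcomp Require Import all_boot all_order all_algebra finfield.
From mathcomp Require Import boolp classical_sets reals lra.
Import Order.TTheory GRing.Theory Num.Theory.
Local Open Scope ring_scope.
Set Implicit Arguments. Unset Strict Implicit. Unset Printing Implicit Defensive.

(* The true syndrome distribution p_{s0,V} has Walsh coefficient (-1)^(u.s0) at
   every u in V^perp.  A probability distribution whose Walsh coefficient at b
   is +-1 is concentrated on the affine hyperplane {s | b.s = b.s0}, so matching
   these values on a basis of V^perp confines every feasible distribution to
   s0 + V.  If s0 is not in V this coset misses 0 and every feasible p has
   p(0) = 0.  If s0 is in V, the Walsh transform of a distribution supported on
   V is constant on the cosets of V^perp, so one representative per coset pins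
   it down completely, and the inversion formula sum_u \hat p(u) = 2^n p(0)
   gives p(0) = 2^-r.  Hence L_t = U_t; since the true distribution is always
   feasible, L_k <= p(0) <= U_k at every round, in particular at the first
   stopping round k <= t. *)

Lemma F2_cases (x : 'F_2) : x = 0 \/ x = 1.
Proof. by case: x => [[|[|k]]] //= lt_x2; [left|right]; apply: val_inj. Qed.

Section Dot.
Variable n : nat.
Implicit Types u v w : 'rV['F_2]_n.

Lemma dotC u v : dotF2 u v = dotF2 v u.
Proof. by rewrite /dotF2 -{1}[u]trmxK -trmx_mul mxE. Qed.

Lemma dotDl u v w : dotF2 (u + v) w = dotF2 u w + dotF2 v w.
Proof. by rewrite /dotF2 mulmxDl mxE. Qed.

Lemma dotBl u v w : dotF2 (u - v) w = dotF2 u w - dotF2 v w.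
Proof. by rewrite /dotF2 mulmxBl !mxE. Qed.

Lemma dotZl (a : 'F_2) u v : dotF2 (a *: u) v = a * dotF2 u v.
Proof. by rewrite /dotF2 -scalemxAl mxE. Qed.

Lemma dot_suml (I : finType) (F : I -> 'rV['F_2]_n) v :
  dotF2 (\sum_i F i) v = \sum_i dotF2 (F i) v.
Proof. by rewrite /dotF2 mulmx_suml summxE. Qed.

Lemma dot0l v : dotF2 0 v = 0.
Proof. by rewrite /dotF2 mul0mx mxE. Qed.

Lemma dotBr u v w : dotF2 u (v - w) = dotF2 u v - dotF2 u w.
Proof. by rewrite dotC dotBl !(dotC u). Qed.

Lemma dotZr (a : 'F_2) u v : dotF2 u (a *: v) = a * dotF2 u v.
Proof. by rewrite dotC dotZl dotC. Qed.

Lemma dot_sumr (I : finType) u (F : I -> 'rV['F_2]_n) :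
  dotF2 u (\sum_i F i) = \sum_i dotF2 u (F i).
Proof. by rewrite dotC dot_suml; apply: eq_bigr => i _; rewrite dotC. Qed.

Lemma dot_span_eq0 (B : seq 'rV['F_2]_n) v w :
  (forall b, b \in B -> dotF2 b v = 0) -> w \in <<B>>%VS -> dotF2 w v = 0.
Proof.
move=> Bv /(@coord_span _ _ _ (in_tuple B)) ->; rewrite dot_suml big1 // => i _.
by rewrite dotZl Bv ?mulr0 // mem_nth.
Qed.

End Dot.

Lemma dimv_rV m : \dim (fullv : {vspace 'rV['F_2]_m}) = m.
Proof. by rewrite dimvf dim_matrix mul1r. Qed.

Section Perp.
Variables (n : nat) (U : {vspace 'rV['F_2]_n}).

Definition perp_mx : 'M['F_2]_(n, \dim U) := (\matrix_(i < \dim U) (vbasis U)`_i)^T.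

Lemma perp_mxE u i : (u *m perp_mx) 0 i = dotF2 u (vbasis U)`_i.
Proof. by rewrite /dotF2 !mxE; apply: eq_bigr => j _; rewrite !mxE. Qed.

Lemma perp_setP u : (u \in perp_set U) = (u *m perp_mx == 0).
Proof.
rewrite inE; apply/forallP/eqP => [uU | uU v].
  apply/rowP => i; rewrite perp_mxE mxE; apply/eqP.
  by have := uU (vbasis U)`_i; rewrite vbasis_mem ?mem_nth ?size_tuple.
apply/implyP => /coord_vbasis ->; rewrite dot_sumr big1 // => i _.
by rewrite dotZr -perp_mxE uU mxE mulr0.
Qed.

Lemma row_full_perp_mx : row_full perp_mx.
Proof.
rewrite /row_full mxrank_tr; apply: inj_row_free => y.
rewrite mulmx_sum_row => y0; apply/rowP => i; rewrite mxE.
move/freeP: (basis_free (vbasisP U)) => /(_ (fun i => y 0 i)) -> //.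
by rewrite -[RHS]y0; apply: eq_bigr => j _; rewrite rowK.
Qed.

Lemma perp_mx_onto (y : 'rV['F_2]_(\dim U)) :
  exists u : 'rV['F_2]_n, u *m perp_mx = y.
Proof.
have [C CM] := row_fullP row_full_perp_mx.
by exists (y *m C); rewrite -mulmxA CM mulmx1.
Qed.

Definition perp_lfun : 'Hom('rV['F_2]_n, 'rV['F_2]_(\dim U)) :=
  linfun (mulmxr perp_mx).

Lemma perp_spaceE : perp_space U = lker perp_lfun.
Proof.
apply/vspaceP => x; apply/idP/idP => [|x0].
  move: x; apply/subvP/span_subvP => x.
  by rewrite mem_enum perp_setP memv_ker lfunE.
by apply: memv_span; rewrite mem_enum perp_setP; rewrite memv_ker lfunE in x0.
Qed.

Lemma mem_perp_space u : (u \in perp_space U) = (u \in perp_set U).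
Proof. by rewrite perp_spaceE memv_ker lfunE perp_setP. Qed.

Lemma dimv_leq : (\dim U <= n)%N.
Proof. by have := dimvS (subvf U); rewrite dimv_rV. Qed.

Lemma dim_perp_space : \dim (perp_space U) = (n - \dim U)%N.
Proof.
have surj : limg perp_lfun = fullv.
  apply/eqP; rewrite eqEsubv subvf; apply/subvP => y _.
  have [u <-] := perp_mx_onto y.
  by rewrite -[_ *m _](lfunE (mulmxr perp_mx)) memv_img ?memvf.
have := limg_ker_dim perp_lfun fullv.
rewrite capfv -perp_spaceE surj => dim_sum.
by rewrite !dimv_rV in dim_sum; rewrite -[X in (X - _)%N]dim_sum addnK.
Qed.

Lemma card_perp_set : #|perp_set U| = (2 ^ (n - \dim U))%N.
Proof.
rewrite -dim_perp_space -[X in (X ^ _)%N](@card_Fp 2) // -card_vspace.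
by apply: eq_card => x; rewrite mem_perp_space.
Qed.

Lemma card_nonzero_cosets : #|nonzero_cosets U| = (2 ^ \dim U - 1)%N.
Proof.
pose fiber (y : 'rV['F_2]_(\dim U)) := [set x | x *m perp_mx == y].
have coset_fiber u : [set u + w | w in perp_set U] = fiber (u *m perp_mx).
  apply/setP => x; rewrite inE; apply/imsetP/eqP => [[w + ->] | xu].
    by rewrite perp_setP mulmxDl => /eqP ->; rewrite addr0.
  by exists (x - u); rewrite ?perp_setP ?mulmxBl ?xu ?subrr // addrC subrK.
have fiber_inj : injective fiber.
  move=> y1 y2 eq_y; have [u uy1] := perp_mx_onto y1.
  have : u \in fiber y1 by rewrite inE uy1.
  by rewrite eq_y inE uy1 => /eqP.
rewrite /nonzero_cosets.
have -> : [set [set u + w | w in perp_set U] | u : 'rV['F_2]_n] =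
          fiber @: [set: 'rV['F_2]_(\dim U)].
  apply/setP => S; apply/imsetP/imsetP => [[u _ ->] | [y _ ->]].
    by exists (u *m perp_mx); rewrite ?inE ?coset_fiber.
  by have [u <-] := perp_mx_onto y; exists u; rewrite ?inE ?coset_fiber.
have -> : perp_set U = fiber 0 by apply/setP => x; rewrite perp_setP inE.
have := cardsD1 (fiber 0) (fiber @: [set: 'rV['F_2]_(\dim U)]).
rewrite imset_f ?inE // card_imset // cardsT card_mx card_Fp //.
by rewrite mul1n add1n => ->; rewrite subn1.
Qed.

End Perp.

Lemma perp_perp_sub n (U : {vspace 'rV['F_2]_n}) x :
  (forall w, w \in perp_set U -> dotF2 w x = 0) -> x \in U.
Proof.
move=> xUpp.
have sub : [pred v in U] \subset perp_set (perp_space U).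
  apply/fintype.subsetP => v vU; rewrite inE; apply/forallP => w; apply/implyP.
  by rewrite mem_perp_space inE dotC => /forallP /(_ v); rewrite vU.
have card_eq : #|[pred v in U]| = #|perp_set (perp_space U)|.
  by rewrite card_perp_set dim_perp_space subKn ?dimv_leq // card_vspace card_Fp.
have := subset_cardP card_eq sub => /(_ x); rewrite !inE => ->.
by apply/forallP => w; apply/implyP; rewrite mem_perp_space dotC => /xUpp ->.
Qed.

Section Walsh.
Variables (R : realType) (n : nat).
Implicit Types (p : {ffun 'rV['F_2]_n -> R}) (u w s : 'rV['F_2]_n).

Definition sgF2 (x : 'F_2) : R := if x == 0 then 1 else -1.

Lemma walshE p u : walsh p u = \sum_s sgF2 (dotF2 u s) * p s.
Proof. by []. Qed.

Lemma sgF2D x y : sgF2 (x + y) = sgF2 x * sgF2 y.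
Proof.
by case: (F2_cases x) => ->; case: (F2_cases y) => ->;
  rewrite /sgF2 /= ?mulrNN ?mulr1 ?mul1r.
Qed.

Lemma sgF2_mul x y : sgF2 x * sgF2 y = if x == y then 1 else -1.
Proof.
by case: (F2_cases x) => ->; case: (F2_cases y) => ->;
  rewrite /sgF2 /= ?mulrNN ?mulr1 ?mul1r.
Qed.

Lemma walsh0 p : walsh p 0 = \sum_s p s.
Proof. by apply: eq_bigr => s _; rewrite dot0l eqxx mul1r. Qed.

Lemma walshD_perp p (V : {vspace 'rV['F_2]_n}) s0 u w :
  (forall s, p s != 0 -> s - s0 \in V) -> w \in perp_set V ->
  walsh p (u + w) = sgF2 (dotF2 w s0) * walsh p u.
Proof.
move=> supp_p; rewrite inE => /forallP w_perp.
rewrite !walshE mulr_sumr; apply: eq_bigr => s _.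
have [-> | /supp_p sV] := eqVneq (p s) 0; first by rewrite !mulr0.
have ws : dotF2 w s = dotF2 w s0.
  by apply/eqP; rewrite -subr_eq0 -dotBr; apply: implyP (w_perp _) sV.
by rewrite dotDl sgF2D ws mulrCA mulrA.
Qed.

Lemma walsh_perp p (V : {vspace 'rV['F_2]_n}) s0 w :
  is_distr p -> (forall s, p s != 0 -> s - s0 \in V) -> w \in perp_set V ->
  walsh p w = sgF2 (dotF2 w s0).
Proof.
move=> [_ p1] supp_p w_perp.
by have := walshD_perp 0 supp_p w_perp; rewrite add0r walsh0 p1 mulr1.
Qed.

Lemma walsh_extremal_support p b c s :
  is_distr p -> walsh p b = sgF2 c -> p s != 0 -> dotF2 b s = c.
Proof.
move=> [p_ge0 p1] pb ps; apply/eqP; apply: contraNT ps => bs_c.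
(* each weight 1 - sgF2 c * sgF2 (b.s') is 0 or 2, and the weighted sum is 0 *)
have terms_ge0 s' : 0 <= (1 - sgF2 c * sgF2 (dotF2 b s')) * p s'.
  by rewrite mulr_ge0 // subr_ge0 sgF2_mul; case: ifP => _; lra.
have sum0 : \sum_s' (1 - sgF2 c * sgF2 (dotF2 b s')) * p s' = 0.
  under eq_bigr => s' _ do rewrite mulrBl mul1r -mulrA.
  by rewrite sumrB p1 -mulr_sumr -walshE pb sgF2_mul eqxx subrr.
have := psumr_eq0P (fun s' _ => terms_ge0 s') sum0 (i := s) isT.
by rewrite sgF2_mul eq_sym (negbTE bs_c) => two_ps0; apply/eqP; lra.
Qed.

Lemma sum_sgF2_dot s :
  \sum_u sgF2 (dotF2 u s) = if s == 0 then (2 ^ n)%:R else 0.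
Proof.
have [-> | s_neq0] := eqVneq s 0.
  under eq_bigr => u _ do rewrite dotC dot0l.
  by rewrite sumr_const card_mx card_Fp // mul1n /sgF2 eqxx.
have [i si] : exists i, s 0 i != 0.
  apply/existsP; apply: contraNT s_neq0 => /existsPn s0.
  by apply/eqP/rowP => i; rewrite mxE; apply/eqP/negPn.
have [u0 u0s] : exists u0, dotF2 u0 s = 1.
  exists (delta_mx 0 i); rewrite /dotF2 -rowE !mxE.
  by case: (F2_cases (s 0 i)) si => ->.
have sum_opp : \sum_u sgF2 (dotF2 u s) = - \sum_u sgF2 (dotF2 u s).
  rewrite {1}(reindex_inj (addIr u0)) -sumrN /=; apply: eq_bigr => u _.
  by rewrite dotDl u0s sgF2D /sgF2 /= mulrN1.
lra.
Qed.

Lemma sum_walsh p : \sum_u walsh p u = (2 ^ n)%:R * p 0.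
Proof.
rewrite exchange_big /=.
under eq_bigr => s _ do rewrite -mulr_suml sum_sgF2_dot.
rewrite (bigD1 0) //= eqxx mulrC big1 ?addr0 // => s /negbTE ->.
by rewrite mul0r.
Qed.

Lemma walsh_eq_at0 p q : walsh p =1 walsh q -> p 0 = q 0.
Proof.
move=> pq; apply: (@mulfI _ (2 ^ n)%:R); first by rewrite pnatr_eq0 expn_eq0.
by rewrite -!sum_walsh; apply: eq_bigr => u _.
Qed.
End Walsh.

Section Coset.
Variables (R : realType) (n : nat) (s0 : 'rV['F_2]_n) (V : {vspace 'rV['F_2]_n}).

Lemma pcoset_support s : pcoset R s0 V s != 0 -> s - s0 \in V.
Proof. by rewrite ffunE; case: ifP; rewrite ?eqxx. Qed.

Lemma pcoset0 : pcoset R s0 V 0 = if s0 \in V then (2 ^+ \dim V)^-1 else 0.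
Proof. by rewrite ffunE sub0r memvN. Qed.

Lemma is_distr_pcoset : is_distr (pcoset R s0 V).
Proof.
split=> [s | ]; first by rewrite ffunE; case: ifP; rewrite ?invr_ge0 ?exprn_ge0.
rewrite (bigID (fun s => s - s0 \in V)) /= [X in _ + X]big1 ?addr0; last first.
  by move=> s /negbTE sV; rewrite ffunE sV.
rewrite (reindex_inj (addIr s0)) /=.
under eq_bigl => v do rewrite addrK.
under eq_bigr => v vV do rewrite ffunE addrK vV.
rewrite sumr_const card_vspace card_Fp // -[_ *+ _]mulr_natr natrX mulVf //.
by rewrite expf_neq0 // pnatr_eq0.
Qed.

End Coset.

Lemma is_distr_bounds (R : realType) n (p : {ffun 'rV['F_2]_n -> R}) :
  is_distr p -> 0 <= p 0 <= 1.
Proof.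
move=> [p_ge0 p1]; rewrite p_ge0 -p1 (bigD1 0) //= lerDl.
by apply: sumr_ge0 => s _.
Qed.

Section Bounds.
Variables (R : realType) (n : nat) (A : nat -> 'M['F_2]_n) (mu : 'rV['F_2]_n -> R).

Lemma Lk_le_feasible k p : feasible A mu k p -> Lk A mu k <= p 0.
Proof.
move=> p_feas; apply: ge_inf; last by exists p.
by exists 0 => _ [q [/is_distr_bounds /andP [] + _ _] <-].
Qed.

Lemma Uk_ge_feasible k p : feasible A mu k p -> p 0 <= Uk A mu k.
Proof.
move=> p_feas; apply: ub_le_sup; last by exists p.
by exists 1 => _ [q [/is_distr_bounds /andP [] _ + _] <-].
Qed.

Lemma Lk_Uk_const k p x : feasible A mu k p ->
  (forall q, feasible A mu k q -> q 0 = x) -> Lk A mu k = x /\ Uk A mu k = x.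
Proof.
move=> p_feas feas_x; rewrite /Lk /Uk.
have -> : [set q 0 | q in feasible A mu k]%classic = [set x]%classic.
  apply/seteqP; split=> [_ [q q_feas <-] | _ ->]; first exact: feas_x.
  by exists p; rewrite ?feas_x.
by rewrite inf1 sup1.
Qed.

End Bounds.

Section Certification.
Variables (R : realType) (n : nat) (V : {vspace 'rV['F_2]_n}) (s0 : 'rV['F_2]_n).
Variables (A : nat -> 'M['F_2]_n) (t : nat) (B : seq 'rV['F_2]_n).
Hypotheses (B_labels : {subset B <= labels A t})
           (B_basis : basis_of (perp_space V) B).

Let mu := walsh (pcoset R s0 V).

Lemma feasible_support p s : feasible A mu t p -> p s != 0 -> s - s0 \in V.
Proof.
move=> [p_distr p_mu] ps; apply: perp_perp_sub => w.
rewrite -mem_perp_space -(span_basis B_basis); apply: dot_span_eq0 => b Bb.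
have b_perp : b \in perp_set V.
  by rewrite -mem_perp_space -(span_basis B_basis) memv_span.
have pb : walsh p b = sgF2 R (dotF2 b s0).
  rewrite p_mu ?B_labels // /mu.
  exact: walsh_perp (is_distr_pcoset _ _ _) (@pcoset_support _ _ _ _) b_perp.
by rewrite dotBr (walsh_extremal_support p_distr pb ps) subrr.
Qed.

Lemma feasible_walsh p : s0 \in V ->
  (forall u, u \notin perp_set V ->
      exists2 q, q \in labels A t & q - u \in perp_set V) ->
  feasible A mu t p -> walsh p =1 mu.
Proof.
move=> s0V reps p_feas u.
have [p_distr p_mu] := p_feas; have p_supp := feasible_support p_feas.
have rho_supp := @pcoset_support R _ s0 V.
have [u_perp | u_nperp] := boolP (u \in perp_set V).
  by rewrite /mu (walsh_perp p_distr p_supp u_perp)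
    (walsh_perp (is_distr_pcoset _ _ _) rho_supp u_perp).
have [q q_labels qu_perp] := reps u u_nperp.
have walsh_shift (p' : {ffun 'rV['F_2]_n -> R}) :
    (forall s, p' s != 0 -> s - s0 \in V) -> walsh p' u = walsh p' q.
  move=> p'_supp; rewrite -[q](subrK u) addrC (walshD_perp _ p'_supp qu_perp).
  move: qu_perp; rewrite inE => /forallP /(_ s0).
  by rewrite s0V => /eqP ->; rewrite mul1r.
by rewrite /mu !walsh_shift // p_mu.
Qed.

Lemma feasible_exact :
  (s0 \in V -> forall u, u \notin perp_set V ->
      exists2 q, q \in labels A t & q - u \in perp_set V) ->
  forall p, feasible A mu t p -> p 0 = pcoset R s0 V 0.
Proof.
move=> reps p p_feas; have [s0V | s0_nV] := boolP (s0 \in V).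
  exact/walsh_eq_at0/(feasible_walsh s0V (reps s0V)).
rewrite pcoset0 (negbTE s0_nV); apply/eqP; apply: contraNT s0_nV.
by move/(feasible_support p_feas); rewrite sub0r memvN.
Qed.

End Certification.

Unset Implicit Arguments.

Theorem proposition9 (R : realType) (n : nat) (V : {vspace 'rV['F_2]_n})
  (s0 : 'rV['F_2]_n) (A : nat -> 'M['F_2]_n) (t : nat) :
  (forall j, A j \in unitmx) ->
  (0 < t)%N ->
  let p_rho := pcoset R s0 V in
  let mu := walsh p_rho in
  (exists B : seq 'rV['F_2]_n,
      {subset B <= labels A t} /\ basis_of (perp_space V) B) ->
  (s0 \in V -> forall u, u \notin perp_set V ->
      exists2 q, q \in labels A t & q - u \in perp_set V) ->
  (exists k : nat,
      [/\ (0 < k <= t)%N, stops A mu 0 k,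
          (forall j : nat, (0 < j < k)%N -> ~ stops A mu 0 j),
          Lk A mu k = p_rho 0 & Uk A mu k = p_rho 0]) /\
  p_rho 0 = (if s0 \in V then (2 ^+ \dim V)^-1 else 0) /\
  (\dim (perp_space V) = (n - \dim V)%N /\
   #|nonzero_cosets V| = (2 ^ \dim V - 1)%N).
Proof.
move=> _ t_gt0 p_rho mu [B [B_labels B_basis]] reps.
have rho_feas k : feasible A mu k p_rho by split; [exact: is_distr_pcoset | ].
have [Lt Ut] := Lk_Uk_const (rho_feas t) (feasible_exact B_labels B_basis reps).
pose P k := `[< (0 < k)%N /\ stops A mu 0 k >].
have Pt : P t by apply/asboolP; split; rewrite // /stops Lt Ut subrr.
have [k /asboolP [k_gt0 stop_k] k_min] := ex_minnP (ex_intro P t Pt).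
have Lk_le := Lk_le_feasible (rho_feas k); have Uk_ge := Uk_ge_feasible (rho_feas k).
split; last by rewrite pcoset0 dim_perp_space card_nonzero_cosets.
exists k; split; rewrite ?k_gt0 ?k_min //.
- move=> j /andP [j_gt0 jk] stop_j.
  by have := k_min j (asboolT (conj j_gt0 stop_j)); rewrite leqNgt jk.
- by rewrite /stops in stop_k; lra.
- by rewrite /stops in stop_k; lra.
Qed.
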